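(* Let $\Gamma$ be a context, $x$ a variable that does not occur in $\Gamma$, and $\Gamma'$ a well-formed context such that $\Gamma' \subseteq (\Gamma, x:C)$ and $\Gamma' \vdash t:A$ is derivable in $\mathcal{T}'$. Then there exists a well-formed context $\Gamma''$ such that $\Gamma'', x:C \vdash t:A$ is derivable in $\mathcal{T}'$.
   Context: Fix a (functional) Pure type system: a set $\mathcal{S}$ of sorts, for each sort $s$ an infinite set $\mathcal{V}_s$ of variables (pairwise disjoint), a functional relation $\mathcal{A}\subseteq \mathcal{S}\times\mathcal{S}$ (axioms) and a functional relation $\mathcal{R}\subseteq\mathcal{S}\times\mathcal{S}\times\mathcal{S}$ (rules). Terms are $t ::= x \mid s \mid (x:A)\rightarrow B \mid \lambda x:A\,t \mid t\,u$, and $\equiv$ denotes ($\beta$-)conversion. A context is a finite sequence $x_1:A_1,\dots,x_n:A_n$ with pairwise distinct variables; $\Gamma\subseteq\Gamma'$ means every declaration $x:A$ of $\Gamma$ also occurs in $\Gamma'$. The usual system $\mathcal{T}$ has the rules: (sort) $\vdash s_1:s_2$ for $\langle s_1,s_2\rangle\in\mathcal{A}$ (empty context); (start) from $\Gamma\vdash A:s$ infer $\Gamma,x:A\vdash x:A$ for $x\in\mathcal{V}_s$; (weak) from $\Gamma\vdash t:A$ and $\Gamma\vdash B:s$ infer $\Gamma,x:B\vdash t:A$ for $x\in\mathcal{V}_s$; (prod) from $\Gamma\vdash A:s_1$ and $\Gamma,x:A\vdash B:s_2$ infer $\Gamma\vdash (x:A)\rightarrow B:s_3$ for $\langle s_1,s_2,s_3\rangle\in\mathcal{R}$;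 (abs) from $\Gamma\vdash A:s_1$, $\Gamma,x:A\vdash B:s_2$ and $\Gamma,x:A\vdash t:B$ infer $\Gamma\vdash\lambda x:A\,t:(x:A)\rightarrow B$ for $\langle s_1,s_2,s_3\rangle\in\mathcal{R}$; (app) from $\Gamma\vdash t:(x:A)\rightarrow B$ and $\Gamma\vdash u:A$ infer $\Gamma\vdash t\,u:(u/x)B$; (conv) from $\Gamma\vdash t:A$ and $\Gamma\vdash B:s$ infer $\Gamma\vdash t:B$ when $A\equiv B$. The system $\mathcal{T}'$ has the rules (prod), (abs), (app), (conv) as in $\mathcal{T}$ together with: (sort') $\Gamma\vdash s_1:s_2$ for any context $\Gamma$ and $\langle s_1,s_2\rangle\in\mathcal{A}$; (var') from $\Gamma,x:A,\Gamma'\vdash A:s$ infer $\Gamma,x:A,\Gamma'\vdash x:A$ for $x\in\mathcal{V}_s$; there is no weakening rule. Well-formed contexts are defined inductively: the empty context is well-formed, and if $\Gamma$ is well-formed and $\Gamma\vdash A:s$ is derivable in $\mathcal{T}$ for some sort $s$, then $\Gamma,x:A$ is well-formed. *)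

(* Pure type systems with sorted variables, in a
   locally-nameless representation (bound variables = de Bruijn indices,
   free variables = names). *)
From Stdlib Require Import List Arith Relations.
Import ListNotations.

(* Terms over sorts [Srt] and variables [Var].  A binder carries the sort
   class [k] of the bound variable (x ∈ V_k), since alpha-renaming keeps the
   class of a variable. *)
Inductive term (Srt Var : Type) : Type :=
| BVar : nat -> term Srt Var
| FVar : Var -> term Srt Var
| Sort : Srt -> term Srt Var
| Prod : Srt -> term Srt Var -> term Srt Var -> term Srt Var
| Lam  : Srt -> term Srt Var -> term Srt Var -> term Srt Var
| App  : term Srt Var -> term Srt Var -> term Srt Var.
Arguments BVar {Srt Var}. Arguments FVar {Srt Var}. Arguments Sort {Srt Var}.
Arguments Prod {Srt Var}. Arguments Lam {Srt Var}. Arguments App {Srt Var}.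

Fixpoint lift {Srt Var : Type} (n c : nat) (t : term Srt Var) : term Srt Var :=
  match t with
  | BVar i => if c <=? i then BVar (i + n) else BVar i
  | FVar x => FVar x
  | Sort s => Sort s
  | Prod k A B => Prod k (lift n c A) (lift n (S c) B)
  | Lam k A u => Lam k (lift n c A) (lift n (S c) u)
  | App u v => App (lift n c u) (lift n c v)
  end.

Fixpoint subst_rec {Srt Var : Type} (d : nat) (u t : term Srt Var) : term Srt Var :=
  match t with
  | BVar i => if i =? d then lift d 0 u
              else if d <? i then BVar (pred i) else BVar i
  | FVar x => FVar x
  | Sort s => Sort s
  | Prod k A B => Prod k (subst_rec d u A) (subst_rec (S d) u B)
  | Lam k A w => Lam k (subst_rec d u A) (subst_rec (S d) u w)
  | App w v => App (subst_rec d u w) (subst_rec d u v)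
  end.

Definition subst0 {Srt Var : Type} (B u : term Srt Var) : term Srt Var := subst_rec 0 u B.
Definition open {Srt Var : Type} (B : term Srt Var) (x : Var) : term Srt Var :=
  subst_rec 0 (FVar x) B.

Fixpoint occurs {Srt Var : Type} (x : Var) (t : term Srt Var) : Prop :=
  match t with
  | BVar _ => False
  | FVar y => y = x
  | Sort _ => False
  | Prod _ A B => occurs x A \/ occurs x B
  | Lam _ A u => occurs x A \/ occurs x u
  | App u v => occurs x u \/ occurs x v
  end.

Inductive beta {Srt Var : Type} : term Srt Var -> term Srt Var -> Prop :=
| beta_redex : forall k A t u, beta (App (Lam k A t) u) (subst0 t u)
| beta_prodL : forall k A A' B, beta A A' -> beta (Prod k A B) (Prod k A' B)
| beta_prodR : forall k A B B', beta B B' -> beta (Prod k A B) (Prod k A B')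
| beta_lamL : forall k A A' t, beta A A' -> beta (Lam k A t) (Lam k A' t)
| beta_lamR : forall k A t t', beta t t' -> beta (Lam k A t) (Lam k A t')
| beta_appL : forall t t' u, beta t t' -> beta (App t u) (App t' u)
| beta_appR : forall t u u', beta u u' -> beta (App t u) (App t u').

Definition conv {Srt Var : Type} : term Srt Var -> term Srt Var -> Prop :=
  clos_refl_sym_trans (term Srt Var) beta.

(* contexts: x1:A1, ..., xn:An as a list in this order; Γ,x:A = Γ ++ [(x,A)] *)
Definition ctx (Srt Var : Type) := list (Var * term Srt Var).
Definition dom {Srt Var : Type} (G : ctx Srt Var) : list Var := map fst G.
Definition is_context {Srt Var : Type} (G : ctx Srt Var) : Prop := NoDup (dom G).
Definition ctx_incl {Srt Var : Type} (G G' : ctx Srt Var) : Prop :=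
  forall d, In d G -> In d G'.
Definition occurs_ctx {Srt Var : Type} (x : Var) (G : ctx Srt Var) : Prop :=
  In x (dom G) \/ exists y A, In (y, A) G /\ occurs x A.

Section PTS.
Context {Srt Var : Type} (vclass : Var -> Srt)   (* x ∈ V_s  iff  vclass x = s *)
        (Ax : Srt -> Srt -> Prop) (Rl : Srt -> Srt -> Srt -> Prop).

Inductive typT : ctx Srt Var -> term Srt Var -> term Srt Var -> Prop :=
| T_sort : forall s1 s2, Ax s1 s2 -> typT [] (Sort s1) (Sort s2)
| T_start : forall G A s x, typT G A (Sort s) -> vclass x = s -> ~ In x (dom G) ->
    typT (G ++ [(x, A)]) (FVar x) A
| T_weak : forall G t A B s x, typT G t A -> typT G B (Sort s) -> vclass x = s ->
    ~ In x (dom G) -> typT (G ++ [(x, B)]) t A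
| T_prod : forall G k A B x s1 s2 s3, typT G A (Sort s1) ->
    typT (G ++ [(x, A)]) (open B x) (Sort s2) -> Rl s1 s2 s3 ->
    vclass x = k -> ~ In x (dom G) -> ~ occurs x B ->
    typT G (Prod k A B) (Sort s3)
| T_abs : forall G k A B t x s1 s2 s3, typT G A (Sort s1) ->
    typT (G ++ [(x, A)]) (open B x) (Sort s2) ->
    typT (G ++ [(x, A)]) (open t x) (open B x) -> Rl s1 s2 s3 ->
    vclass x = k -> ~ In x (dom G) -> ~ occurs x B -> ~ occurs x t ->
    typT G (Lam k A t) (Prod k A B)
| T_app : forall G t u k A B, typT G t (Prod k A B) -> typT G u A ->
    typT G (App t u) (subst0 B u)
| T_conv : forall G t A B s, typT G t A -> typT G B (Sort s) -> conv A B ->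
    typT G t B.

Inductive typT' : ctx Srt Var -> term Srt Var -> term Srt Var -> Prop :=
| T'_sort : forall G s1 s2, is_context G -> Ax s1 s2 -> typT' G (Sort s1) (Sort s2)
| T'_var : forall G1 G2 x A s, typT' (G1 ++ (x, A) :: G2) A (Sort s) -> vclass x = s ->
    typT' (G1 ++ (x, A) :: G2) (FVar x) A
| T'_prod : forall G k A B x s1 s2 s3, typT' G A (Sort s1) ->
    typT' (G ++ [(x, A)]) (open B x) (Sort s2) -> Rl s1 s2 s3 ->
    vclass x = k -> ~ In x (dom G) -> ~ occurs x B ->
    typT' G (Prod k A B) (Sort s3)
| T'_abs : forall G k A B t x s1 s2 s3, typT' G A (Sort s1) ->
    typT' (G ++ [(x, A)]) (open B x) (Sort s2) ->
    typT' (G ++ [(x, A)]) (open t x) (open B x) -> Rl s1 s2 s3 ->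
    vclass x = k -> ~ In x (dom G) -> ~ occurs x B -> ~ occurs x t ->
    typT' G (Lam k A t) (Prod k A B)
| T'_app : forall G t u k A B, typT' G t (Prod k A B) -> typT' G u A ->
    typT' G (App t u) (subst0 B u)
| T'_conv : forall G t A B s, typT' G t A -> typT' G B (Sort s) -> conv A B ->
    typT' G t B.

Inductive wf_ctx : ctx Srt Var -> Prop :=
| wf_nil : wf_ctx []
| wf_snoc : forall G x A s, wf_ctx G -> typT G A (Sort s) -> ~ In x (dom G) ->
    wf_ctx (G ++ [(x, A)]).

End PTS.

Definition pts_spec {Srt Var : Type} (vclass : Var -> Srt)
  (Ax : Srt -> Srt -> Prop) (Rl : Srt -> Srt -> Srt -> Prop) : Prop :=
  (* each V_s is infinite *)
  (forall (s : Srt) (l : list Var), exists x, vclass x = s /\ ~ In x l) /\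
  (forall s s1 s2, Ax s s1 -> Ax s s2 -> s1 = s2) /\
  (forall s1 s2 s3 s3', Rl s1 s2 s3 -> Rl s1 s2 s3' -> s3 = s3').

(* T' has no weakening rule, but its contexts are only required to declare
   distinct variables, so it admits thinning: a judgement in G remains derivable
   in any larger context whose additional variables are fresh for G.  This is
   proved by induction on derivations, simultaneously for every injective
   sort-preserving renaming, so that a bound variable colliding with a new
   declaration can be swapped with a fresh one.

   If x is not declared in G', it does not occur in G' at all (the declarations
   of G' come from G, where x does not occur), and G'' := G' works by thinning.
   Otherwise x:C is a declaration of G' and x occurs nowhere else in G'.  Take
   G'' := G' with x renamed to a fresh w of the same sort: G'' is well formed
   because renaming preserves T-derivations, and G'', x:C is G' thinned by the
   fresh declaration of w. *)

From Stdlib Require Import List Arith Relations FinFun Classical ClassicalEpsilon.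
Import ListNotations.

Section Syntax.
Context {Srt Var : Type}.
Implicit Types (f g : Var -> Var) (v : Var) (t u A B : term Srt Var) (G : ctx Srt Var).

Fixpoint ren f t : term Srt Var :=
  match t with
  | BVar i => BVar i
  | FVar y => FVar (f y)
  | Sort s => Sort s
  | Prod k A B => Prod k (ren f A) (ren f B)
  | Lam k A u => Lam k (ren f A) (ren f u)
  | App u w => App (ren f u) (ren f w)
  end.

Definition renc f G : ctx Srt Var := map (fun d => (f (fst d), ren f (snd d))) G.

Lemma renc_app f G G2 : renc f (G ++ G2) = renc f G ++ renc f G2.
Proof. apply map_app. Qed.

Lemma dom_app G G2 : dom (G ++ G2) = dom G ++ dom G2.
Proof. apply map_app. Qed.

Lemma dom_renc f G : dom (renc f G) = map f (dom G).
Proof. unfold dom, renc; rewrite !map_map; reflexivity. Qed.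

Lemma in_dom_renc f G x : Injective f -> In (f x) (dom (renc f G)) -> In x (dom G).
Proof.
  rewrite dom_renc; intros Hf Hx; apply in_map_iff in Hx.
  destruct Hx as (y & Hy & Hin); apply Hf in Hy; subst; auto.
Qed.

Lemma ren_lift f n c t : ren f (lift n c t) = lift n c (ren f t).
Proof.
  revert c; induction t as [i| | |k A IHA B IHB|k A IHA u IHu|u IHu w IHw]; intros c;
    simpl; try destruct (c <=? i); f_equal; auto.
Qed.

Lemma ren_subst f d u t : ren f (subst_rec d u t) = subst_rec d (ren f u) (ren f t).
Proof.
  revert d; induction t as [i| | |k A IHA B IHB|k A IHA w IHw|w IHw z IHz]; intros d; simpl.
  1: destruct (i =? d); [apply ren_lift | destruct (d <? i); reflexivity].
  all: f_equal; auto.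
Qed.

Lemma ren_open f B x : ren f (open B x) = open (ren f B) (f x).
Proof. apply ren_subst. Qed.

Lemma ren_beta f t u : beta t u -> beta (ren f t) (ren f u).
Proof.
  induction 1; simpl; try (unfold subst0; rewrite ren_subst); constructor; auto.
Qed.

Lemma ren_conv f t u : conv t u -> conv (ren f t) (ren f u).
Proof.
  induction 1; [apply rst_step, ren_beta | apply rst_refl | apply rst_sym | eapply rst_trans];
    eauto.
Qed.

Lemma ren_comp f g t : ren g (ren f t) = ren (fun v => g (f v)) t.
Proof. induction t; simpl; f_equal; auto. Qed.

Lemma renc_comp f g G : renc g (renc f G) = renc (fun v => g (f v)) G.
Proof.
  unfold renc; rewrite map_map; apply map_ext; intros [y A]; simpl; rewrite ren_comp; auto.
Qed.

Lemma ren_id_on f t : (forall v, occurs v t -> f v = v) -> ren f t = t.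
Proof. induction t; simpl; intros Hf; f_equal; auto. Qed.

Lemma renc_id_on f G : (forall v, occurs_ctx v G -> f v = v) -> renc f G = G.
Proof.
  induction G as [|[y A] G IH]; intros Hf; [reflexivity|]; simpl; f_equal.
  - f_equal; [apply Hf; left; left; auto|].
    apply ren_id_on; intros v Hv; apply Hf; right; exists y, A; simpl; auto.
  - apply IH; intros v [Hv|(z&B&HzB&Hv)]; apply Hf; [left; right; auto|].
    right; exists z, B; simpl; auto.
Qed.

Lemma occurs_ren f v t : occurs v (ren f t) -> exists y, v = f y /\ occurs y t.
Proof. induction t; simpl; firstorder eauto. Qed.

Lemma occurs_ren_inj f v t : Injective f -> occurs (f v) (ren f t) -> occurs v t.
Proof.
  intros Hf Ho; destruct (occurs_ren _ _ _ Ho) as (y & Hy & Hyt).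
  apply Hf in Hy; subst; auto.
Qed.

Lemma occurs_lift v n c t : occurs v (lift n c t) -> occurs v t.
Proof.
  revert c; induction t as [i| | |k A IHA B IHB|k A IHA u IHu|u IHu w IHw]; intros c;
    simpl; try destruct (c <=? i); simpl; intuition eauto.
Qed.

Lemma occurs_subst_inv v d u t : occurs v (subst_rec d u t) -> occurs v t \/ occurs v u.
Proof.
  revert d; induction t as [i| | |k A IHA B IHB|k A IHA w IHw|w IHw z IHz]; intros d; simpl.
  1: destruct (i =? d); [eauto using occurs_lift | destruct (d <? i); simpl; tauto].
  all: firstorder.
Qed.

Lemma occurs_open v B x : occurs v B -> occurs v (open B x).
Proof. unfold open; generalize 0; induction B; simpl; intuition. Qed.

Fixpoint fv t : list Var :=
  match t with
  | BVar _ | Sort _ => []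
  | FVar y => [y]
  | Prod _ A B | Lam _ A B | App A B => fv A ++ fv B
  end.

Definition fv_ctx G : list Var := flat_map (fun d => fst d :: fv (snd d)) G.

Lemma occurs_fv v t : occurs v t -> In v (fv t).
Proof. induction t; simpl; rewrite ?in_app_iff; intuition. Qed.

Lemma occurs_ctx_fv v G : occurs_ctx v G -> In v (fv_ctx G).
Proof.
  unfold fv_ctx; intros [Hv|(y&A&HyA&Hv)]; apply in_flat_map.
  - apply in_map_iff in Hv; destruct Hv as (d&<-&Hd); exists d; simpl; auto.
  - exists (y, A); simpl; auto using occurs_fv.
Qed.

Definition swapv (a b v : Var) : Var :=
  if excluded_middle_informative (v = a) then b
  else if excluded_middle_informative (v = b) then a else v.

Lemma swapv_l a b : swapv a b a = b.
Proof. unfold swapv; destruct excluded_middle_informative; congruence. Qed.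

Lemma swapv_other a b v : v <> a -> v <> b -> swapv a b v = v.
Proof. unfold swapv; repeat destruct excluded_middle_informative; congruence. Qed.

Lemma swapv_injective a b : Injective (swapv a b).
Proof. intros u v; unfold swapv; repeat destruct excluded_middle_informative; congruence. Qed.

Lemma ren_swapv_fresh a b t : ~ occurs a t -> ~ occurs b t -> ren (swapv a b) t = t.
Proof. intros Ha Hb; apply ren_id_on; intros v Hv; apply swapv_other; congruence. Qed.

Lemma renc_swapv_fresh a b G : ~ occurs_ctx a G -> ~ occurs_ctx b G -> renc (swapv a b) G = G.
Proof. intros Ha Hb; apply renc_id_on; intros v Hv; apply swapv_other; congruence. Qed.

Lemma occurs_ctx_incl v G G2 : ctx_incl G G2 -> occurs_ctx v G -> occurs_ctx v G2.
Proof.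
  intros Hincl [Hv|(y & A & HyA & Hv)]; [left | right; eauto].
  apply in_map_iff in Hv as (d & <- & Hd); apply in_map; auto.
Qed.

Lemma not_occurs_ctx_incl_snoc x C G L : ~ occurs_ctx x G -> ctx_incl L (G ++ [(x, C)]) ->
  ~ In x (dom L) -> ~ occurs_ctx x L.
Proof.
  intros Hx Hincl HxL [Hv|(y & A & HyA & Hv)]; [tauto|].
  pose proof (Hincl _ HyA) as Hd; apply in_app_iff in Hd as [Hd|[[=<- <-]|[]]].
  - apply Hx; right; eauto.
  - apply HxL, in_map_iff; exists (x, C); auto.
Qed.

Lemma decl_split_fresh x C G L : ~ occurs_ctx x G -> ctx_incl L (G ++ [(x, C)]) ->
  is_context L -> In x (dom L) ->
  exists L1 L2, L = L1 ++ (x, C) :: L2 /\ ~ occurs_ctx x (L1 ++ L2).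
Proof.
  intros Hx Hincl HL HxL.
  assert (HxC : In (x, C) L).
  { apply in_map_iff in HxL as ([y A] & Hy & HyA); simpl in Hy; subst y.
    pose proof (Hincl _ HyA) as Hd; apply in_app_iff in Hd as [Hd|[Hd|[]]].
    - exfalso; apply Hx; left; apply in_map_iff; exists (x, A); auto.
    - congruence. }
  apply in_split in HxC as (L1 & L2 & ->); exists L1, L2; split; [reflexivity|].
  apply (not_occurs_ctx_incl_snoc x C G); auto.
  - intros d Hd; apply Hincl; rewrite in_app_iff in *; simpl; tauto.
  - unfold is_context in HL; rewrite dom_app in *; exact (NoDup_remove_2 _ _ _ HL).
Qed.

End Syntax.

Section Typing.
Context {Srt Var : Type} (vclass : Var -> Srt)
        (Ax : Srt -> Srt -> Prop) (Rl : Srt -> Srt -> Srt -> Prop).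
Implicit Types (f : Var -> Var) (t T A B : term Srt Var) (G H : ctx Srt Var).

Definition class_preserving f : Prop := forall v, vclass (f v) = vclass v.

Lemma swapv_class_preserving a b : vclass a = vclass b -> class_preserving (swapv a b).
Proof. intros Hab v; unfold swapv; repeat destruct excluded_middle_informative; congruence. Qed.

Lemma ren_typT f G t T : Injective f -> class_preserving f ->
  typT vclass Ax Rl G t T -> typT vclass Ax Rl (renc f G) (ren f t) (ren f T).
Proof.
  intros Hf Hcl; induction 1; simpl in *; unfold subst0 in *;
    rewrite ?renc_app, ?ren_open, ?ren_subst in *; simpl in *;
    econstructor; eauto using ren_conv.
  all: try rewrite Hcl; auto.
  all: try (intro Hin; apply in_dom_renc in Hin; auto).
  all: intro Ho; apply occurs_ren_inj in Ho; auto.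
Qed.

Lemma ren_wf f G : Injective f -> class_preserving f ->
  wf_ctx vclass Ax Rl G -> wf_ctx vclass Ax Rl (renc f G).
Proof.
  intros Hf Hcl; induction 1 as [|G x A s _ IH HA Hx]; [constructor|].
  rewrite renc_app; econstructor; [exact IH | exact (ren_typT _ _ _ _ Hf Hcl HA) |].
  intro Hin; apply in_dom_renc in Hin; auto.
Qed.

Lemma is_context_snoc G x A : is_context G -> ~ In x (dom G) -> is_context (G ++ [(x, A)]).
Proof.
  intros HG Hx; unfold is_context; rewrite dom_app; apply NoDup_app; [exact HG | |].
  - constructor; [intros [] | constructor].
  - intros v Hv [<-|[]]; auto.
Qed.

Lemma wf_is_context G : wf_ctx vclass Ax Rl G -> is_context G.
Proof. induction 1; [constructor | apply is_context_snoc; auto]. Qed.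

Lemma in_dom_snoc_neq G x A v : In v (dom (G ++ [(x, A)])) -> v <> x -> In v (dom G).
Proof. rewrite dom_app, in_app_iff; simpl; intuition congruence. Qed.

Lemma typT'_fv G t T : typT' vclass Ax Rl G t T ->
  forall v, occurs v t \/ occurs v T -> In v (dom G).
Proof.
  induction 1 as [G s1 s2 _ _ | G1 G2 x A s _ IHA _
    | G k A B x s1 s2 s3 _ IHA _ IHB _ _ _ HxB
    | G k A B t x s1 s2 s3 _ IHA _ IHB _ IHt _ _ _ HxB Hxt
    | G t u k A B _ IHt _ IHu | G t A B s _ IHt _ IHB _]; intros v Hv; simpl in Hv.
  - tauto.
  - destruct Hv as [<-|Hv]; [|auto].
    rewrite dom_app, in_app_iff; simpl; auto.
  - destruct Hv as [[Hv|Hv]|[]]; [auto|].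
    apply (in_dom_snoc_neq _ x A); [apply IHB; left; apply occurs_open; auto | congruence].
  - destruct Hv as [[Hv|Hv]|[Hv|Hv]]; auto.
    + apply (in_dom_snoc_neq _ x A); [apply IHt; left; apply occurs_open; auto | congruence].
    + apply (in_dom_snoc_neq _ x A); [apply IHB; left; apply occurs_open; auto | congruence].
  - destruct Hv as [[Hv|Hv]|Hv]; auto.
    apply occurs_subst_inv in Hv as [Hv|Hv]; auto.
    apply IHt; right; simpl; auto.
  - destruct Hv; auto.
Qed.

Definition fresh_ext G H : Prop :=
  ctx_incl G H /\ forall v, In v (dom H) -> In v (dom G) \/ ~ occurs_ctx v G.

Lemma fresh_ext_snoc G H x A : fresh_ext G H -> (forall v, occurs v A -> In v (dom G)) ->
  fresh_ext (G ++ [(x, A)]) (H ++ [(x, A)]).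
Proof.
  intros [Hincl Hfresh] HA; split.
  - intros d; rewrite !in_app_iff; firstorder.
  - intros v Hv; destruct (classic (In v (dom (G ++ [(x, A)])))) as [Hin|Hnin]; [now left|].
    right; intros [Hd|(y & B & HyB & HvB)]; [tauto|].
    rewrite dom_app, in_app_iff in Hnin, Hv; simpl in Hnin, Hv.
    destruct Hv as [Hv|Hv]; [|tauto].
    destruct (Hfresh v Hv) as [HvG|HvG]; [tauto|].
    apply in_app_iff in HyB as [HyB|[[=<- <-]|[]]]; [apply HvG; right; eauto | auto].
Qed.

Definition thinnable G t T : Prop :=
  forall f H, Injective f -> class_preserving f -> is_context H -> fresh_ext (renc f G) H ->
  typT' vclass Ax Rl H (ren f t) (ren f T).

Section Thinning.
Hypothesis vars_infinite : forall s (l : list Var), exists x, vclass x = s /\ ~ In x l.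

(* If the binder clashes with a declaration of [H], that variable is fresh for
   [renc f G], so it can be swapped with a fresh one without touching [G]. *)
Lemma rename_binder_fresh f G H z (ts : list (term Srt Var)) :
  Injective f -> class_preserving f -> ~ In z (dom G) -> fresh_ext (renc f G) H ->
  (forall u, In u ts -> ~ occurs z u) ->
  exists g, Injective g /\ class_preserving g /\ ~ In (g z) (dom H) /\
    renc g G = renc f G /\ (forall u, In u ts -> ren g u = ren f u).
Proof.
  intros Hf Hcl Hz [_ Hfresh] Hts.
  destruct (classic (In (f z) (dom H))) as [HzH|HzH]; [|exists f; auto].
  assert (Hfz : ~ occurs_ctx (f z) (renc f G)).
  { destruct (Hfresh _ HzH) as [Hin|]; [apply in_dom_renc in Hin; tauto | auto]. }
  destruct (vars_infinite (vclass (f z))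
              (dom H ++ fv_ctx (renc f G) ++ flat_map (fun u => fv (ren f u)) ts))
    as (y & Hy & Hyfresh).
  rewrite !in_app_iff, in_flat_map in Hyfresh.
  exists (fun v => swapv (f z) y (f v)); repeat split.
  - intros a b Hab; apply Hf, (swapv_injective _ _ _ _ Hab).
  - intros v; rewrite <- (Hcl v); apply swapv_class_preserving; auto.
  - rewrite swapv_l; tauto.
  - rewrite <- renc_comp; apply renc_swapv_fresh; [auto|].
    intro Ho; apply occurs_ctx_fv in Ho; tauto.
  - intros u Hu; rewrite <- ren_comp; apply ren_swapv_fresh.
    + intro Ho; apply occurs_ren_inj in Ho; [exact (Hts u Hu Ho) | auto].
    + intro Ho; apply Hyfresh; right; right; exists u; auto using occurs_fv.
Qed.

(* Listing [Sort s] in [ts] also covers body premises typed by a sort, since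
   [open (Sort s) x] is [Sort s]. *)
Lemma binder_thinning G x A s f H (ts : list (term Srt Var)) :
  typT' vclass Ax Rl G A (Sort s) -> ~ In x (dom G) -> (forall B, In B ts -> ~ occurs x B) ->
  Injective f -> class_preserving f -> is_context H -> fresh_ext (renc f G) H ->
  exists y, vclass y = vclass x /\ ~ In y (dom H) /\ (forall B, In B ts -> ~ occurs y (ren f B)) /\
    forall B B', In B ts -> In B' ts -> thinnable (G ++ [(x, A)]) (open B x) (open B' x) ->
      typT' vclass Ax Rl (H ++ [(y, ren f A)]) (open (ren f B) y) (open (ren f B') y).
Proof.
  intros HA HxG Hts Hf Hcl HH HGH.
  assert (HAdom : forall v, occurs v A -> In v (dom G)) by (intros v Hv; apply (typT'_fv _ _ _ HA); auto).
  destruct (rename_binder_fresh f G H x (A :: ts)) as (g & Hg & Hgcl & HgH & HgG & Hgts); auto.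
  { intros B [<-|HB]; auto. }
  assert (HgA : ren g A = ren f A) by (apply Hgts; left; auto).
  exists (g x); repeat split; auto.
  - intros B HB Ho; rewrite <- (Hgts B) in Ho by (right; auto).
    apply occurs_ren_inj in Ho; auto; exact (Hts B HB Ho).
  - intros B B' HB HB' Hthin; rewrite <- (Hgts B), <- (Hgts B'), <- !ren_open by (right; auto).
    apply Hthin; auto using is_context_snoc.
    rewrite renc_app, HgG; simpl; rewrite HgA; apply fresh_ext_snoc; auto.
    intros v Hv; apply occurs_ren in Hv as (y & -> & Hy); rewrite dom_renc; apply in_map; auto.
Qed.

Lemma typT'_thinnable G t T : typT' vclass Ax Rl G t T -> thinnable G t T.
Proof.
  induction 1 as [G s1 s2 _ Hax | G1 G2 x A s _ IHA Hx
    | G k A B x s1 s2 s3 HA IHA _ IHB Hr Hx HxG HxB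
    | G k A B t x s1 s2 s3 HA IHA _ IHB _ IHt Hr Hx HxG HxB Hxt
    | G t u k A B _ IHt _ IHu | G t A B s _ IHt _ IHB Hconv];
    intros f H Hf Hcl HH HGH; simpl.
  - constructor; auto.
  - assert (Hdecl : In (f x, ren f A) H).
    { apply (proj1 HGH); rewrite renc_app; apply in_elt. }
    apply in_split in Hdecl as (H1 & H2 & ->).
    apply T'_var with (s := s); [exact (IHA f _ Hf Hcl HH HGH) | rewrite Hcl; auto].
  - destruct (binder_thinning G x A s1 f H [B; Sort s2]) as (y & Hy & HyH & HyB & Hbody); auto.
    { intros B' [<-|[<-|[]]]; simpl; auto. }
    apply T'_prod with (x := y) (s1 := s1) (s2 := s2).
    + exact (IHA f H Hf Hcl HH HGH).
    + apply (Hbody B (Sort s2)); simpl; auto.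
    + exact Hr.
    + congruence.
    + exact HyH.
    + apply HyB; simpl; auto.
  - destruct (binder_thinning G x A s1 f H [B; t; Sort s2]) as (y & Hy & HyH & HyB & Hbody); auto.
    { intros B' [<-|[<-|[<-|[]]]]; simpl; auto. }
    apply T'_abs with (x := y) (s1 := s1) (s2 := s2) (s3 := s3).
    + exact (IHA f H Hf Hcl HH HGH).
    + apply (Hbody B (Sort s2)); simpl; auto.
    + apply (Hbody t B); simpl; auto.
    + exact Hr.
    + congruence.
    + exact HyH.
    + apply HyB; simpl; auto.
    + apply HyB; simpl; auto.
  - unfold subst0; rewrite ren_subst.
    eapply T'_app; [exact (IHt f H Hf Hcl HH HGH) | exact (IHu f H Hf Hcl HH HGH)].
  - eapply T'_conv; [exact (IHt f H Hf Hcl HH HGH) | exact (IHB f H Hf Hcl HH HGH) |].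
    apply ren_conv; auto.
Qed.

Lemma typT'_thinning G H t T : typT' vclass Ax Rl G t T -> is_context H -> fresh_ext G H ->
  typT' vclass Ax Rl H t T.
Proof.
  intros HT HH HGH.
  assert (Hid : forall u : term Srt Var, ren (fun v : Var => v) u = u) by (intros u; apply ren_id_on; auto).
  rewrite <- (Hid t), <- (Hid T).
  apply (typT'_thinnable _ _ _ HT); auto.
  - intros a b; auto.
  - intros v; auto.
  - rewrite renc_id_on; auto.
Qed.

Lemma fresh_ext_snoc_fresh G x C : ~ occurs_ctx x G -> fresh_ext G (G ++ [(x, C)]).
Proof.
  intros Hx; split; [intros d Hd; apply in_or_app; auto|].
  intros v; rewrite dom_app, in_app_iff; intros [Hv|[<-|[]]]; auto.
Qed.

Lemma typT'_redeclare G1 G2 x w C t T :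
  wf_ctx vclass Ax Rl (G1 ++ (x, C) :: G2) -> ~ occurs_ctx x (G1 ++ G2) ->
  vclass w = vclass x -> ~ occurs_ctx w (G1 ++ (x, C) :: G2) ->
  typT' vclass Ax Rl (G1 ++ (x, C) :: G2) t T ->
  wf_ctx vclass Ax Rl (G1 ++ (w, ren (swapv x w) C) :: G2) /\
  typT' vclass Ax Rl ((G1 ++ (w, ren (swapv x w) C) :: G2) ++ [(x, C)]) t T.
Proof.
  intros Hwf Hx Hw Hwfresh HT.
  assert (Hwx : w <> x) by (intros ->; apply Hwfresh; left; rewrite dom_app, in_app_iff; simpl; auto).
  assert (Hfix : forall L, ctx_incl L (G1 ++ G2) -> renc (swapv x w) L = L).
  { intros L HL; apply renc_swapv_fresh; intro Ho.
    - exact (Hx (occurs_ctx_incl _ _ _ HL Ho)).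
    - apply Hwfresh; refine (occurs_ctx_incl _ _ _ _ Ho).
      intros d Hd; apply HL in Hd; rewrite in_app_iff in *; simpl; tauto. }
  assert (Hren : renc (swapv x w) (G1 ++ (x, C) :: G2) = G1 ++ (w, ren (swapv x w) C) :: G2).
  { rewrite renc_app; simpl; rewrite swapv_l, !Hfix; auto; intros d Hd; apply in_or_app; auto. }
  assert (Hwf' := ren_wf _ _ (swapv_injective x w) (swapv_class_preserving _ _ (eq_sym Hw)) Hwf).
  rewrite Hren in Hwf'; split; [exact Hwf'|].
  apply (typT'_thinning _ _ _ _ HT).
  - apply is_context_snoc; [exact (wf_is_context _ Hwf')|].
    rewrite dom_app, in_app_iff; simpl; intros [HxG1|[Hxw|HxG2]]; [| congruence |];
      apply Hx; left; rewrite dom_app, in_app_iff; auto.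
  - split.
    + intros d; rewrite !in_app_iff; simpl; tauto.
    + intros v; rewrite !dom_app, !in_app_iff; simpl; intros [[Hv|[<-|Hv]]|[<-|[]]]; auto.
Qed.

End Thinning.
End Typing.

Theorem mainTheorem6 (Srt Var : Type) (vclass : Var -> Srt)
  (Ax : Srt -> Srt -> Prop) (Rl : Srt -> Srt -> Srt -> Prop)
  (G : ctx Srt Var) (x : Var) (C : term Srt Var) (G' : ctx Srt Var)
  (t A : term Srt Var) :
  pts_spec vclass Ax Rl ->
  is_context G ->
  ~ occurs_ctx x G ->
  wf_ctx vclass Ax Rl G' ->
  ctx_incl G' (G ++ [(x, C)]) ->
  typT' vclass Ax Rl G' t A ->
  exists G'' : ctx Srt Var,
    wf_ctx vclass Ax Rl G'' /\ typT' vclass Ax Rl (G'' ++ [(x, C)]) t A.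
Proof.
  intros [vars_infinite _] _ Hx Hwf Hincl HT.
  destruct (classic (In x (dom G'))) as [HxG'|HxG'].
  - destruct (decl_split_fresh x C G G' Hx Hincl (wf_is_context _ _ _ _ Hwf) HxG')
      as (G1 & G2 & -> & HxG12).
    destruct (vars_infinite (vclass x) (fv_ctx (G1 ++ (x, C) :: G2))) as (w & Hw & Hwfresh).
    exists (G1 ++ (w, ren (swapv x w) C) :: G2).
    apply typT'_redeclare; auto.
    intro Ho; exact (Hwfresh (occurs_ctx_fv _ _ Ho)).
  - exists G'; split; [exact Hwf|].
    apply (typT'_thinning _ _ _ vars_infinite _ _ _ _ HT).
    + apply is_context_snoc; [exact (wf_is_context _ _ _ _ Hwf) | exact HxG'].
    + apply fresh_ext_snoc_fresh, (not_occurs_ctx_incl_snoc x C G); auto.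
Qed.
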